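(* For every $i\in\{1,\dots,n\}$, in ${\mathcal U}_D^{\ge0}\otimes{\mathcal U}_D^{\ge0}$, $$\Delta(x_i)=K_{-\deg(x_i)}\otimes x_i+x_i\otimes1+\hat q\sum_{j=i+1}^nE_{j\downarrow i+1}K_{-\deg(x_j)}\otimes x_j,$$ $$\Delta(y_i)=K_{-\deg(y_i)}\otimes y_i+y_i\otimes1+\hat q\Big(\sum_{j=1}^n\epsilon_{ij}K_{-\deg(x_j)}\otimes x_j+\sum_{j=1}^{i-1}E_{j+1\uparrow i}K_{-\deg(y_j)}\otimes y_j\Big).$$
   Context: Let $k$ be an algebraically closed field of characteristic $0$ and $q\in k^\times$ not a root of unity; $\hat q=q-q^{-1}$; $n\ge3$. Let $Q(D_{n+1})$ be the lattice of $(a_1,\dots,a_{n+1})\in\mathbb Z^{n+1}$ with even coordinate sum, standard inner product, simple roots $\alpha_1=e_1+e_2$, $\alpha_i=e_i-e_{i-1}$ ($2\le i\le n+1$), reflections $s_i$. Write $[u,v]=uv-q^{-1}vu$. ${\mathcal U}_q(\mathfrak{so}_{2n+2})$ is generated by $E_i,F_i,K_\mu$ with the standard relations ($K_0=1$, $K_\mu K_\lambda=K_{\mu+\lambda}$, $K_\mu E_iK_{-\mu}=q^{\langle\mu,\alpha_i\rangle}E_i$, $K_\mu F_iK_{-\mu}=q^{-\langle\mu,\alpha_i\rangle}F_i$, $E_iE_j=E_jE_i$ if $\langle\alpha_i,\alpha_j\rangle\in\{0,2\}$, $E_i[E_i,E_j]=q[E_i,E_j]E_i$ if $\langle\alpha_i,\alpha_j\rangle=-1$,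 same for $F$'s, $E_iF_j-F_jE_i=\delta_{ij}(K_{\alpha_i}-K_{-\alpha_i})/\hat q$), Hopf structure $\Delta(E_i)=K_{-\alpha_i}\otimes E_i+E_i\otimes1$, $\Delta(K_\mu)=K_\mu\otimes K_\mu$, and Lusztig automorphisms $T_i$ ($T_iK_\mu=K_{s_i\mu}$, $T_iE_i=-F_iK_{\alpha_i}$, $T_iE_j=E_j$ if $\langle\alpha_i,\alpha_j\rangle=0$, $T_iE_j=E_iE_j-q^{-1}E_jE_i$ if $\langle\alpha_i,\alpha_j\rangle=-1$). ${\mathcal U}_D^{\ge0}$ is the Hopf subalgebra generated by all $E_i$ and $K_\mu$. Root vectors of $w_n=(s_{n+1}\cdots s_1)(s_3\cdots s_{n+1})$ (defined via $X_{\beta_\ell}=T_{i_1}\cdots T_{i_{\ell-1}}E_{i_\ell}$ for the reduced word $s_{i_1}\cdots s_{i_{2n}}$) are $x_i=X_{e_{n+1}-e_i}$, $y_i=X_{e_{n+1}+e_i}$, with degrees $\deg(x_i)=e_{n+1}-e_i$, $\deg(y_i)=e_{n+1}+e_i$; they satisfy $x_n=E_{n+1}$, $x_i=[x_{i+1},E_{i+1}]$, $y_1=[x_2,E_1]$, $y_{i+1}=[y_i,E_{i+1}]$. For $r\ge s$ in $\{1,\dots,n+1\}$ define $E_{r\downarrow r}=E_r$, $E_{r\downarrow s}=[E_{r\downarrow s+1},E_s]$ ($r\ne s$), $E_{s\uparrow s}=E_s$, $E_{s\uparrow r}=[E_{s\uparrow r-1},E_r]$ ($r\ne s$). For $i,j\in\{1,\dots,n\}$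 define $\epsilon_{11}=0$, $\epsilon_{1j}=T_jT_{j-1}\cdots T_2E_1$ ($j\ne1$), and $\epsilon_{i+1,j}=[\epsilon_{ij},E_{i+1}]$ if $j\ne i,i+1$; $\epsilon_{i+1,i+1}=q\epsilon_{i,i+1}E_{i+1}-q^{-1}E_{i+1}\epsilon_{i,i+1}$; $\epsilon_{i+1,i}=\epsilon_{i,i+1}+q^{-1}(\epsilon_{ii}E_{i+1}-E_{i+1}\epsilon_{ii})$. *)

From HB Require Import structures.
From mathcomp Require Import all_boot all_order all_algebra.
Set Implicit Arguments. Unset Strict Implicit. Unset Printing Implicit Defensive.
Import Order.TTheory GRing.Theory Num.Theory.
Local Open Scope ring_scope.

(* Weights: vectors in Z^{n+1}; coordinate e_i (1 <= i <= n+1) is the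
   ordinal i-1 of 'I_(n+1). *)
Definition wt (n : nat) := {ffun 'I_n.+1 -> int}.

Definition ev (n i : nat) : wt n :=
  [ffun j : 'I_n.+1 => ((val j == i.-1 : bool) : nat)%:Z].

Definition alpha (n i : nat) : wt n :=
  if i == 1%N then ev n 1 + ev n 2 else ev n i - ev n i.-1.

Definition ip (n : nat) (mu la : wt n) : int := \sum_(j < n.+1) mu j * la j.

(* membership in the root lattice Q(D_{n+1}): even coordinate sum *)
Definition inQ (n : nat) (mu : wt n) : bool := (2 %| \sum_(j < n.+1) mu j)%Z.

Definition refl (n i : nat) (mu : wt n) : wt n :=
  mu - alpha n i *~ ip mu (alpha n i).

Definition degx (n i : nat) : wt n := ev n n.+1 - ev n i.
Definition degy (n i : nat) : wt n := ev n n.+1 + ev n i.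

Section Uq.
Variables (k : fieldType) (A : algType k) (q : k) (n : nat).
Variables (E F : nat -> A) (K : wt n -> A).

Definition br (u v : A) : A := u * v - q^-1 *: (v * u).

Definition qhat : k := q - q^-1.

Definition in_rng (i : nat) : bool := (1 <= i <= n.+1)%N.

Definition UqD_rels : Prop :=
  [/\ K 0 = 1,
      forall mu la, inQ mu -> inQ la -> K (mu + la) = K mu * K la,
      forall mu i, inQ mu -> in_rng i ->
        K mu * E i * K (- mu) = q ^ (ip mu (alpha n i)) *: E i,
      forall mu i, inQ mu -> in_rng i ->
        K mu * F i * K (- mu) = q ^ (- ip mu (alpha n i)) *: F i
    & [/\ forall i j, in_rng i -> in_rng j ->
        (ip (alpha n i) (alpha n j) == 0) || (ip (alpha n i) (alpha n j) == 2) ->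
        (E i * E j = E j * E i /\ F i * F j = F j * F i),
      forall i j, in_rng i -> in_rng j -> ip (alpha n i) (alpha n j) = -1 ->
        (E i * br (E i) (E j) = q *: (br (E i) (E j) * E i) /\
         F i * br (F i) (F j) = q *: (br (F i) (F j) * F i))
    & forall i j, in_rng i -> in_rng j ->
        E i * F j - F j * E i =
        if i == j then qhat^-1 *: (K (alpha n i) - K (- alpha n i)) else 0]].

Variable T : nat -> A -> A.

Definition lusztig_rels : Prop :=
  forall i, in_rng i ->
  [/\ forall mu, inQ mu -> T i (K mu) = K (refl i mu),
      T i (E i) = - (F i * K (alpha n i)),
      forall j, in_rng j -> ip (alpha n i) (alpha n j) = 0 -> T i (E j) = E j
    & forall j, in_rng j -> ip (alpha n i) (alpha n j) = -1 ->
        T i (E j) = E i * E j - q^-1 *: (E j * E i)].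

(* root vectors: x_n = E_{n+1}, x_i = [x_{i+1}, E_{i+1}] (by recursion on n-i) *)
Fixpoint xrec (d : nat) : A :=
  match d with
  | 0 => E n.+1
  | d'.+1 => br (xrec d') (E (n - d'))
  end.
Definition xv (i : nat) : A := xrec (n - i).

Fixpoint yrec (m : nat) : A :=
  match m with
  | 0 => br (xv 2) (E 1)
  | m'.+1 => br (yrec m') (E m'.+2)
  end.
Definition yv (i : nat) : A := yrec i.-1.

(* E_{r down s}, with d = r - s *)
Fixpoint Edn (r d : nat) : A :=
  match d with
  | 0 => E r
  | d'.+1 => br (Edn r d') (E (r - d))
  end.
Definition Edown (r s : nat) : A := Edn r (r - s).

(* E_{s up r}, with d = r - s *)
Fixpoint Eupr (s d : nat) : A :=
  match d with
  | 0 => E s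
  | d'.+1 => br (Eupr s d') (E (s + d))
  end.
Definition Eup (s r : nat) : A := Eupr s (r - s).

Fixpoint Tchain (j : nat) (a : A) : A :=
  match j with
  | 0 | 1 => a
  | j'.+1 => T j (Tchain j' a)
  end.

(* epsF m j = epsilon_{m+1, j} *)
Fixpoint epsF (m : nat) (j : nat) : A :=
  match m with
  | 0 => if j == 1%N then 0 else Tchain j (E 1)
  | m'.+1 =>
      (* here i = m, so epsF m' = epsilon_{i,.}, result is epsilon_{i+1,j} *)
      let i := m in
      if j == i.+1 then
        q *: (epsF m' i.+1 * E i.+1) - q^-1 *: (E i.+1 * epsF m' i.+1)
      else if j == i then
        epsF m' i.+1 + q^-1 *: (epsF m' i * E i.+1 - E i.+1 * epsF m' i)
      else br (epsF m' j) (E i.+1)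
  end.
Definition eps (i j : nat) : A := epsF i.-1 j.

End Uq.

From HB Require Import structures.
From mathcomp Require Import all_boot all_order all_algebra.
From mathcomp Require Import ring zify.
Set Implicit Arguments. Unset Strict Implicit. Unset Printing Implicit Defensive.
Import Order.TTheory GRing.Theory Num.Theory.
Local Open Scope ring_scope.

(* Delta is an algebra map, so Delta([u, E_m]) = [Delta u, Delta E_m] for the
   q-bracket [u, v] = uv - q^-1 vu; the formulas therefore follow by induction
   along the recursive definitions x_i = [x_{i+1}, E_{i+1}] (descending from
   x_n = E_{n+1}) and y_{i+1} = [y_i, E_{i+1}] (ascending from y_1 = [x_2, E_1]).
   One inductive step brackets every term of the known formula with
   Delta(E_m) = K_{-alpha_m} (x) E_m + E_m (x) 1.  The key computation
   (br_tens_DeltaE) does this for a (x) b with a a weight vector; its two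
   specialisations br_lead_DeltaE and br_tail_DeltaE handle the leading terms
   and the terms of the sums, given the commutation relations of the x_j, y_j
   with the E_m, which are derived from the quantum Serre relations. *)

(* Identities in a noncommutative k-algebra are decided by reflection:
   both sides are expanded into k-linear combinations of words in the
   atoms, and the identity follows from equality of the coefficient of
   every word, which leaves equations in the field k. *)
Section NoncommutativeNormalForm.
Variables (k : fieldType) (A : algType k).

Inductive ncexpr : Type :=
  | NAtom of nat | NScale of k & ncexpr | NAdd of ncexpr & ncexpr
  | NMul of ncexpr & ncexpr | NOpp of ncexpr | NZero | NOne.

Fixpoint ncden (env : seq A) (e : ncexpr) : A :=
  match e with
  | NAtom i => nth 0 env i
  | NScale c e => c *: ncden env e
  | NAdd e1 e2 => ncden env e1 + ncden env e2
  | NMul e1 e2 => ncden env e1 * ncden env e2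
  | NOpp e => - ncden env e
  | NZero => 0
  | NOne => 1
  end.

Definition monomial := (k * seq nat)%type.

(* Equality of words written with [Nat.eqb], so that it reduces under [cbv]. *)
Fixpoint wordeq (w1 w2 : seq nat) : bool :=
  match w1, w2 with
  | nil, nil => true
  | a :: w1', b :: w2' => Nat.eqb a b && wordeq w1' w2'
  | _, _ => false
  end.

Lemma wordeqP w1 w2 : reflect (w1 = w2) (wordeq w1 w2).
Proof.
elim: w1 w2 => [|a w1 IH] [|b w2] /=; try by constructor.
case: (PeanoNat.Nat.eqb_spec a b) => [->|neq_ab] /=; last by constructor; case.
by case: IH => [->|neq_w]; constructor; [|case].
Qed.

Fixpoint wordmem (w : seq nat) (s : seq (seq nat)) : bool :=
  if s is w' :: s' then wordeq w w' || wordmem w s' else false.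

Fixpoint wordundup (s : seq (seq nat)) : seq (seq nat) :=
  if s is w :: s' then
    if wordmem w s' then wordundup s' else w :: wordundup s'
  else nil.

Fixpoint nfmul (p1 p2 : seq monomial) : seq monomial :=
  if p1 is m :: p1' then
    map (fun m2 => (m.1 * m2.1, m.2 ++ m2.2)) p2 ++ nfmul p1' p2
  else nil.

Fixpoint nf (e : ncexpr) : seq monomial :=
  match e with
  | NAtom i => [:: (1, [:: i])]
  | NScale c e => map (fun m => (c * m.1, m.2)) (nf e)
  | NAdd e1 e2 => nf e1 ++ nf e2
  | NMul e1 e2 => nfmul (nf e1) (nf e2)
  | NOpp e => map (fun m => (- m.1, m.2)) (nf e)
  | NZero => nil
  | NOne => [:: (1, nil)]
  end.

Fixpoint coefw (p : seq monomial) (w : seq nat) : k :=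
  if p is m :: p' then (if wordeq m.2 w then m.1 else 0) + coefw p' w else 0.

Fixpoint same_coefs (p1 p2 : seq monomial) (s : seq (seq nat)) : Prop :=
  if s is w :: s' then coefw p1 w = coefw p2 w /\ same_coefs p1 p2 s' else True.

Variable env : seq A.

Fixpoint evword (w : seq nat) : A :=
  if w is a :: w' then nth 0 env a * evword w' else 1.

Fixpoint evnf (p : seq monomial) : A :=
  if p is m :: p' then m.1 *: evword m.2 + evnf p' else 0.

Lemma evword_cat w1 w2 : evword (w1 ++ w2) = evword w1 * evword w2.
Proof. by elim: w1 => [|a w IH] /=; rewrite ?mul1r // IH mulrA. Qed.

Lemma evnf_cat p1 p2 : evnf (p1 ++ p2) = evnf p1 + evnf p2.
Proof. by elim: p1 => [|m p IH] /=; rewrite ?add0r // IH addrA. Qed.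

Lemma evnf_scale (f : k -> k) (c : k) p : (forall x, f x = c * x) ->
  evnf (map (fun m => (f m.1, m.2)) p) = c *: evnf p.
Proof.
move=> fE; elim: p => [|m p IH] /=; first by rewrite scaler0.
by rewrite IH fE scalerDr scalerA.
Qed.

Lemma evnf_mul p1 p2 : evnf (nfmul p1 p2) = evnf p1 * evnf p2.
Proof.
elim: p1 => [|m p IH] /=; first by rewrite mul0r.
rewrite evnf_cat IH mulrDl; congr (_ + _).
elim: p2 {IH} => [|m2 p2 IH2] /=; first by rewrite mulr0.
by rewrite mulrDr IH2 evword_cat -scalerAl -scalerAr -scalerAl scalerA mulrC.
Qed.

Lemma evnf_nf e : evnf (nf e) = ncden env e.
Proof.
elim: e => [i|c e IH|e1 IH1 e2 IH2|e1 IH1 e2 IH2|e IH||] /=.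
- by rewrite scale1r mulr1 addr0.
- by rewrite (evnf_scale _ (c := c)) ?IH.
- by rewrite evnf_cat IH1 IH2.
- by rewrite evnf_mul IH1 IH2.
- by rewrite (evnf_scale _ (c := -1)) ?IH ?scaleN1r // => x; rewrite mulN1r.
- by [].
- by rewrite scale1r addr0.
Qed.

Lemma wordmemP w s : reflect (w \in s) (wordmem w s).
Proof.
elim: s => [|w' s IH] /=; first by constructor.
rewrite in_cons; case: (wordeqP w w') => [->|neq_w] /=; first by rewrite eqxx; constructor.
by rewrite (introF eqP neq_w).
Qed.

Lemma mem_wordundup w s : (w \in wordundup s) = (w \in s).
Proof.
elim: s => [|w' s IH] //=.
by case: (wordmemP w' s) => w's; rewrite !in_cons IH //; case: eqP => // ->.
Qed.

Lemma wordundup_uniq s : uniq (wordundup s).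
Proof.
elim: s => [|w' s IH] //=.
by case: (wordmemP w' s) => w's //=; rewrite mem_wordundup (introF idP w's) IH.
Qed.

Lemma evnf_coefs p s : uniq s -> {subset map snd p <= s} ->
  evnf p = \sum_(w <- s) coefw p w *: evword w.
Proof.
move=> uniq_s; elim: p => [|m p IH] /= sub_s.
  by rewrite big1 // => w _; rewrite scale0r.
rewrite IH; last by move=> w wp; apply: sub_s; rewrite in_cons wp orbT.
under [RHS]eq_bigr do rewrite scalerDl.
rewrite big_split /=; congr (_ + _).
have ms : m.2 \in s by apply: sub_s; rewrite in_cons eqxx.
rewrite (bigD1_seq m.2) //= big1 ?addr0; first by rewrite (introT (wordeqP _ _) erefl).
move=> w /negPf neq_w; case: (wordeqP m.2 w) => [e|_]; last by rewrite scale0r.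
by rewrite e eqxx in neq_w.
Qed.

Lemma same_coefsP p1 p2 s :
  same_coefs p1 p2 s -> forall w, w \in s -> coefw p1 w = coefw p2 w.
Proof.
elim: s => [|w' s IH] //= [eq_w' eq_s] w; rewrite in_cons.
by case/orP => [/eqP -> //|]; apply: IH.
Qed.

Lemma ncden_eq e1 e2 :
  same_coefs (nf e1) (nf e2) (wordundup (map snd (nf e1) ++ map snd (nf e2))) ->
  ncden env e1 = ncden env e2.
Proof.
set s := wordundup _ => coefs_eq.
have uniq_s : uniq s by apply: wordundup_uniq.
rewrite -!evnf_nf (evnf_coefs (p := nf e1) uniq_s); last first.
  by move=> w wp; rewrite mem_wordundup mem_cat wp.
rewrite (evnf_coefs (p := nf e2) uniq_s); last first.
  by move=> w wp; rewrite mem_wordundup mem_cat wp orbT.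
rewrite big_seq_cond [RHS]big_seq_cond; apply: eq_bigr => w.
by rewrite andbT => ws; rewrite (same_coefsP coefs_eq ws).
Qed.
End NoncommutativeNormalForm.

Ltac nc_same x y := constr:(ltac:(tryif unify x y then exact true else exact false)).
Ltac nc_in x ls :=
  lazymatch ls with
  | nil => constr:(false)
  | ?y :: ?ls' =>
      let b := nc_same x y in
      lazymatch b with true => constr:(true) | false => nc_in x ls' end
  end.
Ltac nc_index x ls :=
  lazymatch ls with
  | ?y :: ?ls' =>
      let b := nc_same x y in
      lazymatch b with
      | true => constr:(O)
      | false => let i := nc_index x ls' in constr:(S i)
      end
  end.
Ltac nc_atoms t acc :=
  match t with
  | ?x + ?y => let acc := nc_atoms x acc in nc_atoms y acc
  | ?x * ?y => let acc := nc_atoms x acc in nc_atoms y acc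
  | - ?x => nc_atoms x acc
  | _ *: ?x => nc_atoms x acc
  | 0 => acc
  | 1 => acc
  | _ => let b := nc_in t acc in
         lazymatch b with true => acc | false => constr:(t :: acc) end
  end.
Ltac nc_reify K t env :=
  match t with
  | ?x + ?y => let a := nc_reify K x env in let b := nc_reify K y env in constr:(NAdd a b)
  | ?x * ?y => let a := nc_reify K x env in let b := nc_reify K y env in constr:(NMul a b)
  | - ?x => let a := nc_reify K x env in constr:(NOpp a)
  | ?c *: ?x => let a := nc_reify K x env in constr:(NScale c a)
  | 0 => constr:(@NZero K)
  | 1 => constr:(@NOne K)
  | _ => let i := nc_index t env in constr:(@NAtom K i)
  end.

(* [nc_field K hq] proves an identity in a K-algebra whose coefficients are
   rational functions in a nonzero [q] (with [hq : q != 0]). *)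
Ltac nc_field K hq :=
  match goal with
  | |- @eq ?T ?l ?r =>
      let env0 := nc_atoms l (@nil T) in
      let env := nc_atoms r env0 in
      let el := nc_reify K l env in
      let er := nc_reify K r env in
      change (ncden env el = ncden env er)
  end;
  apply: ncden_eq;
  cbv beta iota zeta delta [same_coefs coefw nf nfmul wordundup wordmem wordeq
                            cat map fst snd Nat.eqb andb orb];
  repeat split; field; try done; try exact hq.

Section QBracket.
Variables (k : fieldType) (A : algType k) (q : k).

Lemma br0l (w : A) : br q 0 w = 0.
Proof. by rewrite /br mul0r mulr0 scaler0 subrr. Qed.

Lemma brDl (u v w : A) : br q (u + v) w = br q u w + br q v w.
Proof. by rewrite /br mulrDl mulrDr scalerDr opprD addrACA. Qed.

Lemma brZl (c : k) (u w : A) : br q (c *: u) w = c *: br q u w.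
Proof. by rewrite /br -scalerAl -scalerAr scalerBr !scalerA mulrC. Qed.

Lemma br_sum (I : Type) (r : seq I) (P : pred I) (G : I -> A) w :
  br q (\sum_(j <- r | P j) G j) w = \sum_(j <- r | P j) br q (G j) w.
Proof. by elim/big_rec2: _ => [|j x y _ <-]; rewrite ?br0l ?brDl. Qed.

Lemma lrmorph_br (B : algType k) (f : {lrmorphism A -> B}) u v :
  f (br q u v) = br q (f u) (f v).
Proof. by rewrite /br rmorphB [X in _ - X = _]linearZ_LR !rmorphM. Qed.
End QBracket.

Section SerreRelations.
Variables (k : fieldType) (A : algType k) (q : k).
Hypothesis q_neq0 : q != 0.

Definition serre (u a : A) : A := u * a * a - (q + q^-1) *: (a * u * a) + a * a * u.

Lemma serre_of_qcomm (a b : A) : a * br q a b = q *: (br q a b * a) -> serre b a = 0.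
Proof.
move=> qcomm; have -> : serre b a = a * br q a b - q *: (br q a b * a).
  by rewrite /serre /br; nc_field k q_neq0.
by rewrite qcomm subrr.
Qed.

Lemma qcomm_of_serre (u a : A) : serre u a = 0 -> br q u a * a = q *: (a * br q u a).
Proof.
move=> Su; apply/eqP; rewrite -subr_eq0 -Su /serre /br.
by apply/eqP; nc_field k q_neq0.
Qed.

Lemma br_comm (u b c : A) : u * c = c * u -> b * c = c * b -> br q u b * c = c * br q u b.
Proof.
move=> uc bc; apply/eqP; rewrite -subr_eq0.
have -> : br q u b * c - c * br q u b = u * (b * c - c * b) + (u * c - c * u) * b
   - q^-1 *: (b * (u * c - c * u) + (b * c - c * b) * u).
  by rewrite /br; nc_field k q_neq0.
by rewrite uc bc !subrr !(mulr0, mul0r, scaler0, subr0, add0r, addr0, oppr0).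
Qed.

Lemma serre_br_comm (X a b : A) : X * a = a * X -> serre b a = 0 -> serre (br q X b) a = 0.
Proof.
move=> Xa Sb.
have -> : serre (br q X b) a = X * serre b a - q^-1 *: (serre b a * X)
   + (q + q^-1) *: ((X * a - a * X) * b * a) - a * (X * a - a * X) * b
   - (X * a - a * X) * a * b
   - q^-1 *: (b * (X * a - a * X) * a + b * a * (X * a - a * X)
              - (q + q^-1) *: (a * b * (X * a - a * X))).
  by rewrite /serre /br; nc_field k q_neq0.
by rewrite Sb Xa subrr !(mulr0, mul0r, scaler0, subr0, add0r, addr0, oppr0).
Qed.

(* If u, b commute and both satisfy the Serre relation with a, then [[u, a], b]
   commutes with a (the q-bracket of three root vectors of a rank-two
   subsystem of type A_3 centred at a). *)
Lemma br_br_comm (u a b : A) : q + q^-1 != 0 ->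
  u * b = b * u -> serre u a = 0 -> serre b a = 0 ->
  br q (br q u a) b * a = a * br q (br q u a) b.
Proof.
move=> q2_neq0 ub Su Sb.
have : (q + q^-1) *: (br q (br q u a) b * a - a * br q (br q u a) b) =
  - (u * serre b a) + q^-2 *: (serre b a * u) + serre u a * b - q^-2 *: (b * serre u a)
  + q^-2 *: (a * a * (u * b - b * u)) - (1 + q^-2) *: (a * (u * b - b * u) * a)
  + (u * b - b * u) * a * a.
  by rewrite /serre /br; nc_field k q_neq0.
rewrite Su Sb ub subrr !(mulr0, mul0r, scaler0, subr0, add0r, addr0, oppr0) => /eqP.
by rewrite scaler_eq0 (negPf q2_neq0) /= subr_eq0 => /eqP.
Qed.
End SerreRelations.

Section Weights.
Variable n : nat.
Implicit Types mu la nu : wt n.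

Lemma wtD mu la j : (mu + la) j = mu j + la j.
Proof. by rewrite /GRing.add /= ffunE. Qed.
Lemma wtN mu j : (- mu) j = - mu j.
Proof. by rewrite /GRing.opp /= ffunE. Qed.

Lemma wt_ext mu la : (forall j, mu j = la j) -> mu = la.
Proof. by move=> eq_j; apply/ffunP. Qed.

Lemma ipDl mu la nu : ip (mu + la) nu = ip mu nu + ip la nu.
Proof. by rewrite /ip -big_split; apply: eq_bigr => j _; rewrite wtD mulrDl. Qed.
Lemma ipDr mu la nu : ip nu (mu + la) = ip nu mu + ip nu la.
Proof. by rewrite /ip -big_split; apply: eq_bigr => j _; rewrite wtD mulrDr. Qed.
Lemma ipNl mu nu : ip (- mu) nu = - ip mu nu.
Proof. by rewrite /ip -sumrN; apply: eq_bigr => j _; rewrite wtN mulNr. Qed.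
Lemma ipNr mu nu : ip nu (- mu) = - ip nu mu.
Proof. by rewrite /ip -sumrN; apply: eq_bigr => j _; rewrite wtN mulrN. Qed.
Lemma ip0r nu : ip nu 0 = 0.
Proof. by rewrite /ip big1 // => j _; rewrite /GRing.zero /= ffunE mulr0. Qed.
Lemma ipC mu la : ip mu la = ip la mu.
Proof. by apply: eq_bigr => j _; rewrite mulrC. Qed.
Lemma ip_ev a b : (a.-1 < n.+1)%N ->
  ip (ev n a) (ev n b) = ((a.-1 == b.-1 : bool) : nat)%:Z.
Proof.
move=> ha; rewrite /ip (bigD1 (Ordinal ha)) //= big1 ?addr0; first by rewrite !ffunE /= eqxx mul1r.
move=> j /eqP neq_j; rewrite !ffunE (introF eqP) ?mul0r // => e.
by apply: neq_j; apply: val_inj.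
Qed.

Lemma coord_sum_ev a : (a.-1 < n.+1)%N -> \sum_(j < n.+1) ev n a j = 1.
Proof.
move=> ha; rewrite (bigD1 (Ordinal ha)) //= big1 ?addr0; first by rewrite !ffunE /= eqxx.
move=> j /eqP neq_j; rewrite !ffunE (introF eqP) // => e.
by apply: neq_j; apply: val_inj.
Qed.

Lemma inQN mu : inQ mu -> inQ (- mu).
Proof. by rewrite /inQ (eq_bigr _ (fun j _ => wtN mu j)) sumrN rpredN. Qed.

Lemma inQ_evB a b : (a.-1 < n.+1)%N -> (b.-1 < n.+1)%N -> inQ (ev n a - ev n b).
Proof.
move=> ha hb; rewrite /inQ (eq_bigr _ (fun j _ => wtD _ _ j)) big_split /=.
by rewrite (eq_bigr _ (fun j _ => wtN _ j)) sumrN !coord_sum_ev // subrr dvdz0.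
Qed.
Lemma inQ_evD a b : (a.-1 < n.+1)%N -> (b.-1 < n.+1)%N -> inQ (ev n a + ev n b).
Proof. by move=> ha hb; rewrite /inQ (eq_bigr _ (fun j _ => wtD _ _ j)) big_split /= !coord_sum_ev. Qed.
End Weights.

Ltac wt_ring := apply: wt_ext => ?; rewrite ?(wtD, wtN); ring.

Lemma alpha1 n : alpha n 1 = ev n 1 + ev n 2.
Proof. by []. Qed.
Lemma alphaS n i : (2 <= i)%N -> alpha n i = ev n i - ev n i.-1.
Proof. by rewrite /alpha; case: i => [|[|i]]. Qed.

Ltac decide_nat_eqs :=
  repeat match goal with |- context [(?x == ?y)] =>
    first [ rewrite (_ : (x == y) = true); last by apply/eqP; lia
          | rewrite (_ : (x == y) = false); last by apply/eqP; lia ] end.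
Ltac ip_compute :=
  rewrite ?alpha1 ?alphaS; try lia;
  rewrite ?(ipDl, ipDr, ipNl, ipNr, ip0r) ?ip_ev; try lia;
  decide_nat_eqs; simpl; lia.

(* The Dynkin diagram of D_{n+1}: node 1 is joined to node 3, and nodes
   i, i+1 are joined for 2 <= i <= n. *)
Section CartanData.
Variable n : nat.
Hypothesis n_ge3 : (3 <= n)%N.

Lemma ip_far i j : (2 <= i <= n.+1)%N -> (2 <= j <= n.+1)%N ->
  (i.+2 <= j)%N || (j.+2 <= i)%N -> ip (alpha n i) (alpha n j) = 0.
Proof. by move=> hi hj hij; ip_compute. Qed.
Lemma ip_adj i : (2 <= i <= n)%N ->
  ip (alpha n i.+1) (alpha n i) = -1 /\ ip (alpha n i) (alpha n i.+1) = -1.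
Proof. by move=> hi; split; ip_compute. Qed.
Lemma ip_12 : ip (alpha n 1) (alpha n 2) = 0 /\ ip (alpha n 2) (alpha n 1) = 0.
Proof. by split; ip_compute. Qed.
Lemma ip_13 : ip (alpha n 1) (alpha n 3) = -1 /\ ip (alpha n 3) (alpha n 1) = -1.
Proof. by split; ip_compute. Qed.
Lemma inQ_alpha i : in_rng n i -> inQ (alpha n i).
Proof.
rewrite /in_rng => hi; case: (ltngtP i 1) => [|lt1i|->]; first lia.
  by rewrite alphaS //; apply: inQ_evB; lia.
by apply: inQ_evD; lia.
Qed.
End CartanData.

Lemma down_ind (n : nat) (P : nat -> Prop) :
  P n -> (forall i, (i < n)%N -> P i.+1 -> P i) -> forall i, (i <= n)%N -> P i.
Proof.
move=> Pn step i le_in; rewrite -(subKn le_in).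
elim: (n - i)%N (leq_subr i n) => [|d IH] le_dn; first by rewrite subn0.
apply: step; first lia.
by rewrite (_ : (n - d.+1).+1 = n - d)%N; [apply: IH; lia | lia].
Qed.

Section QuantumGroupD.
Variables (k : fieldType) (q : k) (n : nat) (A : algType k) (E F : nat -> A).
Hypotheses (q_neq0 : q != 0) (q2_neq0 : q + q^-1 != 0) (n_ge3 : (3 <= n)%N).
Hypothesis E_comm_rel : forall i j, in_rng n i -> in_rng n j ->
  (ip (alpha n i) (alpha n j) == 0) || (ip (alpha n i) (alpha n j) == 2) ->
  E i * E j = E j * E i /\ F i * F j = F j * F i.
Hypothesis E_serre_rel : forall i j, in_rng n i -> in_rng n j ->
  ip (alpha n i) (alpha n j) = -1 ->
  E i * br q (E i) (E j) = q *: (br q (E i) (E j) * E i) /\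
  F i * br q (F i) (F j) = q *: (br q (F i) (F j) * F i).

Local Notation x := (xv q n E).
Local Notation y := (yv q n E).

Lemma E_comm_nonadj m l : (1 <= m)%N -> (m.+2 <= l <= n.+1)%N ->
  (2 <= m)%N || (4 <= l)%N -> E l * E m = E m * E l.
Proof.
move=> m_ge1 hl nonadj.
have hl' : in_rng n l by rewrite /in_rng; lia.
have hm' : in_rng n m by rewrite /in_rng; lia.
have ip0 : ip (alpha n l) (alpha n m) = 0.
  by case: (ltngtP m 1) nonadj => [|lt1m|->] nonadj; [lia|ip_compute|ip_compute].
by case: (E_comm_rel hl' hm'); rewrite ?ip0 ?eqxx.
Qed.

Lemma E_serre i j : in_rng n i -> in_rng n j -> ip (alpha n i) (alpha n j) = -1 ->
  serre q (E j) (E i) = 0.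
Proof. by move=> hi hj adj; apply: serre_of_qcomm => //; case: (E_serre_rel hi hj adj). Qed.

Lemma E_serre_adj m : (2 <= m <= n)%N -> serre q (E m.+1) (E m) = 0.
Proof. by move=> hm; apply: E_serre; rewrite /in_rng; try lia; case: (ip_adj n_ge3 hm). Qed.

Lemma xv_n : x n = E n.+1.
Proof. by rewrite /xv subnn. Qed.

Lemma xv_rec i : (i < n)%N -> x i = br q (x i.+1) (E i.+1).
Proof.
move=> lt_in; rewrite /xv (_ : (n - i = (n - i.+1).+1)%N); last lia.
by rewrite /= (_ : (n - (n - i.+1) = i.+1)%N) //; lia.
Qed.

Lemma x_E_comm m j : (1 <= m < j)%N -> (j <= n)%N -> (2 <= m)%N || (3 <= j)%N ->
  x j * E m = E m * x j.
Proof.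
move=> /andP[m_ge1 lt_mj] le_jn; move: j le_jn lt_mj; apply: down_ind => [|j lt_jn IH] lt_mj cond.
  by rewrite xv_n E_comm_nonadj //; lia.
rewrite xv_rec //; apply: br_comm => //; first by apply: IH; lia.
by rewrite E_comm_nonadj //; lia.
Qed.

Lemma x_serre m : (2 <= m <= n)%N -> serre q (x m) (E m) = 0.
Proof.
move=> /andP[m_ge2 le_mn]; move: m le_mn m_ge2; apply: down_ind => [|m lt_mn IH] m_ge2.
  by rewrite xv_n E_serre_adj //; lia.
rewrite xv_rec //; apply: serre_br_comm => //; last by apply: E_serre_adj; lia.
by apply: x_E_comm; lia.
Qed.

Lemma x_qcomm i : (1 <= i < n)%N -> x i * E i.+1 = q *: (E i.+1 * x i).
Proof. by move=> hi; rewrite xv_rec; [apply: qcomm_of_serre => //; apply: x_serre|]; lia. Qed.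

Lemma x_E_comm_low j i : (1 <= j < i)%N -> (i < n)%N -> x j * E i.+1 = E i.+1 * x j.
Proof.
move=> /andP[j_ge1 lt_ji] lt_in.
have le_j : (j <= i.-1)%N by lia.
move: j le_j j_ge1 lt_ji; apply: down_ind => [|j lt_j IH] j_ge1 lt_ji.
  rewrite xv_rec; last lia.
  rewrite prednK; last lia.
  rewrite (xv_rec (i := i)) //.
  apply: br_br_comm => //; first by rewrite x_E_comm //; lia.
    by apply: x_serre; lia.
  by apply: E_serre; rewrite /in_rng; try lia; case: (ip_adj n_ge3 (i := i)); lia.
rewrite xv_rec; last lia.
by apply: br_comm => //; [apply: IH; lia | apply/esym/E_comm_nonadj; lia].
Qed.

Lemma yv_1 : y 1 = br q (x 2) (E 1).
Proof. by []. Qed.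

Lemma yv_rec i : (1 <= i)%N -> y i.+1 = br q (y i) (E i.+1).
Proof. by case: i. Qed.

Lemma y_E_comm j i : (1 <= j < i)%N -> (i < n)%N -> y j * E i.+1 = E i.+1 * y j.
Proof.
move=> /andP[j_ge1 lt_ji] lt_in; elim: j j_ge1 lt_ji => [|j IH] // j_ge1 lt_ji.
case: (ltngtP j 0) => [|j_gt0|j0]; first lia.
  by rewrite yv_rec //; apply: br_comm => //; [apply: IH; lia | apply/esym/E_comm_nonadj; lia].
rewrite j0 yv_1; case: (ltngtP i 2) => [|i_gt2|i2]; first lia.
  by apply: br_comm => //; [apply: x_E_comm_low; lia | apply/esym/E_comm_nonadj; lia].
rewrite i2 xv_rec //; apply: br_br_comm => //.
- by rewrite x_E_comm //; lia.
- by apply: x_serre; lia.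
- by apply: E_serre; rewrite /in_rng; try lia; case: (ip_13 n_ge3).
Qed.

Lemma Edown_id j : Edown q E j j = E j.
Proof. by rewrite /Edown subnn. Qed.

Lemma Edown_rec j s : (s < j)%N -> Edown q E j s = br q (Edown q E j s.+1) (E s).
Proof.
move=> lt_sj; rewrite /Edown (_ : (j - s = (j - s.+1).+1)%N); last lia.
by rewrite /= (_ : (j - (j - s.+1).+1 = s)%N) //; lia.
Qed.

Lemma Eup_id s : Eup q E s s = E s.
Proof. by rewrite /Eup subnn. Qed.

Lemma Eup_rec s r : (s <= r)%N -> Eup q E s r.+1 = br q (Eup q E s r) (E r.+1).
Proof.
move=> le_sr; rewrite /Eup (_ : (r.+1 - s = (r - s).+1)%N); last lia.
by rewrite /= (_ : (s + (r - s).+1 = r.+1)%N) //; lia.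
Qed.

Variable T : nat -> {lrmorphism A -> A}.
Variable K : wt n -> A.
Hypothesis T_rels : lusztig_rels q E F K (fun i => T i : A -> A).

Local Notation eps := (eps q E (fun l => T l : A -> A)).

Lemma T_fix i j : in_rng n i -> in_rng n j -> ip (alpha n i) (alpha n j) = 0 ->
  T i (E j) = E j.
Proof. by move=> hi hj orth; case: (T_rels hi) => _ _ ->. Qed.

Lemma T_adj i j : in_rng n i -> in_rng n j -> ip (alpha n i) (alpha n j) = -1 ->
  T i (E j) = br q (E i) (E j).
Proof. by move=> hi hj adj; case: (T_rels hi) => _ _ _ ->. Qed.

Lemma T_Edn j d : (4 <= j <= n.+1)%N -> (d + 3 <= j.-1)%N ->
  T j (Edn q E j.-1 d) = Edn q E j d.+1.
Proof.
move=> hj; elim: d => [|d IH] hd /=.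
  rewrite T_adj /in_rng; try lia.
    by rewrite (_ : (j - 1 = j.-1)%N) //; lia.
  by ip_compute.
rewrite lrmorph_br IH; last lia.
rewrite T_fix /in_rng; try lia.
  by rewrite (_ : (j.-1 - d.+1 = j - d.+2)%N) //; lia.
by apply: (ip_far n_ge3); lia.
Qed.

Lemma eps11 : eps 1 1 = 0.
Proof. by []. Qed.

Lemma eps12 : eps 1 2 = E 1.
Proof. by rewrite /eps /= T_fix /in_rng; try lia; case: (ip_12 n_ge3). Qed.

Lemma eps1j j : (3 <= j <= n.+1)%N -> eps 1 j = br q (Edown q E j 3) (E 1).
Proof.
move=> hj; rewrite /eps /= (introF eqP); last lia.
elim: j hj => [|j IH] hj //; case: (ltngtP j 2) => [|j_gt2|j2]; first lia.
  rewrite (_ : Tchain _ j.+1 _ = T j.+1 (Tchain (fun l => T l : A -> A) j (E 1))); last first.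
    by case: j {IH hj} j_gt2 => [|[|j]].
  rewrite IH; last lia.
  rewrite lrmorph_br T_fix /in_rng; try lia; last by ip_compute.
  rewrite /Edown (_ : (j.+1 - 3 = (j - 3).+1)%N); last lia.
  by rewrite -T_Edn //; lia.
rewrite j2 /= T_fix /in_rng; try lia; last by case: (ip_12 n_ge3).
by rewrite T_adj /in_rng ?Edown_id //; try lia; case: (ip_13 n_ge3).
Qed.

Lemma eps_rec i j : (1 <= i)%N -> eps i.+1 j =
  if j == i.+1 then q *: (eps i i.+1 * E i.+1) - q^-1 *: (E i.+1 * eps i i.+1)
  else if j == i then eps i i.+1 + q^-1 *: (eps i i * E i.+1 - E i.+1 * eps i i)
  else br q (eps i j) (E i.+1).
Proof. by case: i. Qed.

Hypotheses (K_zero : K 0 = 1)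
  (K_add : forall mu la, inQ mu -> inQ la -> K (mu + la) = K mu * K la)
  (K_conj_E : forall mu i, inQ mu -> in_rng n i ->
     K mu * E i * K (- mu) = q ^ (ip mu (alpha n i)) *: E i).

Definition is_weight (mu : wt n) (a : A) : Prop :=
  forall la, inQ la -> K la * a = q ^ (ip la mu) *: (a * K la).

Lemma K_inv mu : inQ mu -> K (- mu) * K mu = 1.
Proof. by move=> hmu; rewrite -K_add ?inQN // addNr. Qed.

Lemma K_comm mu la : inQ mu -> inQ la -> K mu * K la = K la * K mu.
Proof. by move=> hmu hla; rewrite -!K_add // addrC. Qed.

Lemma weight_E i : in_rng n i -> is_weight (alpha n i) (E i).
Proof.
move=> hi la hla; rewrite -[LHS]mulr1 -(K_inv hla) !mulrA K_conj_E //.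
by rewrite -scalerAl.
Qed.

Lemma weight_K nu : inQ nu -> is_weight 0 (K nu).
Proof. by move=> hnu la hla; rewrite ip0r expr0z scale1r K_comm. Qed.

Lemma weight_0 mu : is_weight mu 0.
Proof. by move=> la hla; rewrite mulr0 mul0r scaler0. Qed.

Lemma weight_mul mu nu a b : is_weight mu a -> is_weight nu b -> is_weight (mu + nu) (a * b).
Proof.
move=> wa wb la hla; rewrite mulrA wa // -scalerAl -(mulrA a (K la)) wb //.
by rewrite -scalerAr scalerA mulrA ipDr expfzDr.
Qed.

Lemma weight_add mu a b : is_weight mu a -> is_weight mu b -> is_weight mu (a + b).
Proof. by move=> wa wb la hla; rewrite mulrDr wa // wb // mulrDl scalerDr. Qed.

Lemma weight_scale mu c a : is_weight mu a -> is_weight mu (c *: a).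
Proof. by move=> wa la hla; rewrite -scalerAr wa // scalerA mulrC -scalerA scalerAl. Qed.

Lemma weight_sub mu a b : is_weight mu a -> is_weight mu b -> is_weight mu (a - b).
Proof.
move=> wa wb; apply: weight_add => //.
by move=> la hla; rewrite mulrN wb // mulNr scalerN.
Qed.

Lemma weight_br mu nu a b : is_weight mu a -> is_weight nu b -> is_weight (mu + nu) (br q a b).
Proof.
move=> wa wb; apply: weight_sub; first exact: weight_mul.
by apply: weight_scale; rewrite addrC; apply: weight_mul.
Qed.

Lemma weight_eq mu nu a : mu = nu -> is_weight mu a -> is_weight nu a.
Proof. by move->. Qed.

Lemma weight_x j : (1 <= j <= n)%N -> is_weight (degx n j) (x j).
Proof.
move=> /andP[j_ge1 le_jn]; move: j le_jn j_ge1; apply: down_ind => [|j lt_jn IH] j_ge1.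
  rewrite xv_n; apply: (weight_eq _ (weight_E _)); rewrite /in_rng; try lia.
  by rewrite alphaS.
rewrite xv_rec //; apply: (weight_eq _ (weight_br (IH _) (weight_E _))); rewrite /in_rng; try lia.
by rewrite alphaS /degx //; wt_ring.
Qed.

Lemma weight_y j : (1 <= j <= n)%N -> is_weight (degy n j) (y j).
Proof.
elim: j => [|j IH] hj //; case: (ltngtP j 0) => [|j_gt0|->]; first lia.
  rewrite yv_rec //; apply: (weight_eq _ (weight_br (IH _) (weight_E _))); rewrite /in_rng; try lia.
  by rewrite alphaS /degy //; wt_ring.
rewrite yv_1; apply: (weight_eq _ (weight_br (weight_x _) (weight_E _))); rewrite /in_rng; try lia.
by rewrite alpha1 /degx /degy; wt_ring.
Qed.

Lemma weight_Edown j s : (2 <= s <= j)%N -> (j <= n.+1)%N ->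
  is_weight (ev n j - ev n s.-1) (Edown q E j s).
Proof.
move=> /andP[s_ge2 le_sj] le_jn; move: s le_sj s_ge2; apply: down_ind => [|s lt_sj IH] s_ge2.
  rewrite Edown_id; apply: (weight_eq _ (weight_E _)); rewrite /in_rng; try lia.
  by rewrite alphaS.
rewrite Edown_rec //; apply: (weight_eq _ (weight_br (IH _) (weight_E _))); rewrite /in_rng; try lia.
by rewrite alphaS //=; wt_ring.
Qed.

Lemma weight_Eup s r : (2 <= s <= r)%N -> (r <= n.+1)%N ->
  is_weight (ev n r - ev n s.-1) (Eup q E s r).
Proof.
move=> hs; elim: r hs => [|r IH] hs le_rn; first lia.
have [lt_sr|->] : (s < r.+1)%N \/ s = r.+1 by lia.
  rewrite Eup_rec; last lia.
  apply: (weight_eq _ (weight_br (IH _ _) (weight_E _))); rewrite /in_rng; try lia.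
  by rewrite alphaS /=; [wt_ring|lia].
rewrite Eup_id; apply: (weight_eq _ (weight_E _)); rewrite /in_rng; try lia.
by rewrite alphaS //; lia.
Qed.

Lemma weight_eps i j : (1 <= i <= n)%N -> (1 <= j <= n)%N -> is_weight (ev n i + ev n j) (eps i j).
Proof.
have wE m : (2 <= m <= n.+1)%N -> is_weight (ev n m - ev n m.-1) (E m).
  by move=> hm; rewrite -alphaS; [apply: weight_E; rewrite /in_rng|]; lia.
elim: i j => [|i IH] j hi hj //; case: (ltngtP i 0) => [|i_gt0|->]; first lia.
  have hEi : (2 <= i.+1 <= n.+1)%N by lia.
  rewrite eps_rec //; case: eqP => [->|ne_j1].
    by apply: weight_sub; apply: weight_scale;
      [apply: (weight_eq _ (weight_mul (IH _ _ _) (wE _ hEi)))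
      |apply: (weight_eq _ (weight_mul (wE _ hEi) (IH _ _ _)))]; try lia; wt_ring.
  case: eqP => [->|ne_j0].
    apply: weight_add; first by apply: (weight_eq _ (IH _ _ _)); try lia; wt_ring.
    by apply: weight_scale; apply: weight_sub;
      [apply: (weight_eq _ (weight_mul (IH _ _ _) (wE _ hEi)))
      |apply: (weight_eq _ (weight_mul (wE _ hEi) (IH _ _ _)))]; try lia; wt_ring.
  by apply: (weight_eq _ (weight_br (IH _ _ _) (wE _ hEi))); try lia; wt_ring.
have [lt_j2|[->|->]] : (2 < j)%N \/ j = 2 \/ j = 1 by lia.
- rewrite eps1j; last lia.
  apply: (weight_eq _ (weight_br (weight_Edown _ _) (weight_E _))); rewrite /in_rng; try lia.
  by rewrite alpha1 /=; wt_ring.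
- by rewrite eps12; apply: (weight_eq _ (weight_E _)); rewrite /in_rng; try lia.
- by rewrite eps11; apply: weight_0.
Qed.

Lemma inQ_degx j : (1 <= j <= n.+1)%N -> inQ (degx n j).
Proof. by move=> hj; apply: inQ_evB; lia. Qed.

Lemma inQ_degy j : (1 <= j <= n.+1)%N -> inQ (degy n j).
Proof. by move=> hj; apply: inQ_evD; lia. Qed.

(* The coproduct: tens u v = i1 u * i2 v stands for u (x) v in B. *)
Variables (B : algType k) (i1 i2 Delta : {lrmorphism A -> B}).
Hypothesis tens_comm : forall a b : A, i1 a * i2 b = i2 b * i1 a.
Definition tens (u v : A) : B := i1 u * i2 v.
Hypothesis Delta_E : forall i, in_rng n i ->
  Delta (E i) = tens (K (- alpha n i)) (E i) + tens (E i) 1.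

Lemma tensM a b c d : tens a b * tens c d = tens (a * c) (b * d).
Proof. by rewrite /tens mulrA -(mulrA (i1 a)) -tens_comm mulrA -rmorphM -mulrA -rmorphM. Qed.
Lemma tensDl a b c : tens (a + b) c = tens a c + tens b c.
Proof. by rewrite /tens rmorphD mulrDl. Qed.
Lemma tensZl (s : k) a b : tens (s *: a) b = s *: tens a b.
Proof. by rewrite /tens linearZ_LR scalerAl. Qed.
Lemma tensZr (s : k) a b : tens a (s *: b) = s *: tens a b.
Proof. by rewrite /tens linearZ_LR scalerAr. Qed.
Lemma tensBl a b c : tens (a - b) c = tens a c - tens b c.
Proof. by rewrite /tens rmorphB mulrBl. Qed.
Lemma tensBr a b c : tens c (a - b) = tens c a - tens c b.
Proof. by rewrite /tens rmorphB mulrBr. Qed.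
Lemma tens0l b : tens 0 b = 0.
Proof. by rewrite /tens rmorph0 mul0r. Qed.
Lemma tens0r b : tens b 0 = 0.
Proof. by rewrite /tens rmorph0 mulr0. Qed.

Lemma br_tens_DeltaE mu a b m : is_weight mu a -> in_rng n m ->
  br q (tens a b) (Delta (E m)) =
  tens (a * K (- alpha n m)) (b * E m - (q^-1 * q ^ (ip (- alpha n m) mu)) *: (E m * b))
  + tens (br q a (E m)) b.
Proof.
move=> wa hm; have hK := wa _ (inQN (inQ_alpha n_ge3 hm)).
rewrite Delta_E // /br mulrDr mulrDl !tensM hK tensZl mulr1 mul1r.
rewrite tensBr tensZr tensBl tensZl.
by nc_field k q_neq0.
Qed.

Lemma br_mulK_E a nu m : inQ nu -> in_rng n m ->
  br q (a * K nu) (E m) = (q ^ (ip nu (alpha n m)) *: (a * E m) - q^-1 *: (E m * a)) * K nu.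
Proof.
move=> hnu hm; rewrite /br -mulrA (weight_E hm hnu) mulrBl -!scalerAl !mulrA.
by rewrite -scalerAr mulrA.
Qed.

Lemma br_K_E nu m : inQ nu -> in_rng n m ->
  br q (K nu) (E m) = (q ^ (ip nu (alpha n m)) - q^-1) *: (E m * K nu).
Proof.
move=> hnu hm; rewrite -[K nu]mul1r br_mulK_E // mul1r mulr1 mulrBl -!scalerAl.
by rewrite mul1r scalerBl.
Qed.

Lemma br_lead_DeltaE mu u m : inQ mu -> is_weight mu u -> in_rng n m ->
  ip mu (alpha n m) = -1 ->
  br q (tens (K (- mu)) u + tens u 1) (Delta (E m)) =
  tens (K (- (mu + alpha n m))) (br q u (E m)) + tens (br q u (E m)) 1
  + qhat q *: tens (E m * K (- mu)) u.
Proof.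
move=> hmu wu hm ip_m; have hal := inQ_alpha n_ge3 hm.
have ip_am : ip (- alpha n m) mu = 1 by rewrite ipNl ipC ip_m opprK.
have ip_ma : ip (- mu) (alpha n m) = 1 by rewrite ipNl ip_m opprK.
have K_sum : K (- mu) * K (- alpha n m) = K (- (mu + alpha n m)).
  by rewrite opprD K_add // inQN.
rewrite brDl (br_tens_DeltaE _ (weight_K (inQN hmu)) hm) (br_tens_DeltaE _ wu hm).
rewrite br_K_E ?inQN // ip0r expr0z mulr1 K_sum ip_am ip_ma expr1z mulVf //.
by rewrite scale1r mulr1 mul1r subrr tens0r add0r tensZl /qhat addrAC.
Qed.

Lemma br_tail_DeltaE mu d c v m : inQ d -> is_weight mu c -> in_rng n m ->
  ip mu (alpha n m) = -1 -> ip d (alpha n m) = 0 -> v * E m = E m * v ->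
  br q (tens (c * K (- d)) v) (Delta (E m)) = tens (br q c (E m) * K (- d)) v.
Proof.
move=> hd wc hm ip_mu ip_d vE.
have ip_am : ip (- alpha n m) (mu + 0) = 1 by rewrite addr0 ipNl ipC ip_mu opprK.
rewrite (br_tens_DeltaE _ (weight_mul wc (weight_K (inQN hd))) hm) ip_am expr1z mulVf //.
rewrite scale1r vE subrr tens0r add0r br_mulK_E ?inQN //.
by rewrite ipNl ip_d oppr0 expr0z scale1r.
Qed.

Definition Delta_x_formula (i : nat) : Prop :=
  Delta (x i) = tens (K (- degx n i)) (x i) + tens (x i) 1
    + qhat q *: \sum_(i.+1 <= j < n.+1) tens (Edown q E j i.+1 * K (- degx n j)) (x j).

Lemma Delta_x_n : Delta_x_formula n.
Proof.
rewrite /Delta_x_formula big_geq // scaler0 addr0 xv_n Delta_E /in_rng; last lia.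
by rewrite alphaS //; lia.
Qed.

Lemma Delta_x_step i : (1 <= i < n)%N -> Delta_x_formula i.+1 -> Delta_x_formula i.
Proof.
move=> hi IH; have hm : in_rng n i.+1 by rewrite /in_rng; lia.
have ip_x : ip (degx n i.+1) (alpha n i.+1) = -1 by rewrite /degx; ip_compute.
have deg_x : degx n i.+1 + alpha n i.+1 = degx n i by rewrite alphaS /degx; [wt_ring|lia].
rewrite /Delta_x_formula [in LHS]xv_rec; last lia.
rewrite lrmorph_br IH brDl brZl br_sum (br_lead_DeltaE (inQ_degx _) (weight_x _) hm ip_x); try lia.
rewrite deg_x -xv_rec; last lia.
rewrite (big_ltn (m := i.+1)) ?Edown_id; last lia.
rewrite (eq_big_nat _ _ (F2 := fun j => tens (Edown q E j i.+1 * K (- degx n j)) (x j))).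
  by rewrite scalerDr addrA.
move=> j hj; rewrite (br_tail_DeltaE (inQ_degx _) (weight_Edown (j := j) (s := i.+2) _ _) hm).
- by rewrite -Edown_rec //; lia.
all: try lia.
- by rewrite /=; ip_compute.
- by rewrite /degx; ip_compute.
- by apply: x_E_comm; lia.
Qed.

Lemma Delta_x i : (1 <= i <= n)%N -> Delta_x_formula i.
Proof.
move=> /andP[i_ge1 le_in]; move: i le_in i_ge1; apply: down_ind => [|i lt_in IH] i_ge1.
  exact: Delta_x_n.
by apply: Delta_x_step; [lia | apply: IH; lia].
Qed.

(* Bracketing a term of the epsilon-sum of Delta(y_i) with Delta(E_{i+1})
   turns epsilon_{ij} into epsilon_{i+1,j}, up to two correction terms (for
   j = i+1 and j = i) which cancel in the sum. *)
Lemma br_eps_DeltaE i j : (1 <= i < n)%N -> (1 <= j <= n)%N ->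
  br q (tens (eps i j * K (- degx n j)) (x j)) (Delta (E i.+1)) =
  tens (eps i.+1 j * K (- degx n j)) (x j)
  + (if j == i.+1 then tens (eps i i.+1 * K (- degx n i)) (x i) else 0)
  - (if j == i then tens (eps i i.+1 * K (- degx n i)) (x i) else 0).
Proof.
move=> hi hj; have hm : in_rng n i.+1 by rewrite /in_rng; lia.
have hdeg l : (1 <= l <= n)%N -> inQ (- degx n l) by move=> hl; apply/inQN/inQ_degx; lia.
have w_term l : (1 <= l <= n)%N -> is_weight (ev n i + ev n l + 0) (eps i l * K (- degx n l)).
  by move=> hl; apply: weight_mul; [apply: weight_eps; lia | apply/weight_K/hdeg].
rewrite eps_rec; last lia.
case: (eqVneq j i.+1) => [->|ne_j1]; last case: (eqVneq j i) => [->|ne_j0].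
- rewrite (introF eqP) ?subr0; last lia.
  rewrite (br_tens_DeltaE _ (w_term _ _) hm) ?br_mulK_E ?hdeg //; try lia.
  have -> : ip (- alpha n i.+1) (ev n i + ev n i.+1 + 0) = 0 by ip_compute.
  have -> : ip (- degx n i.+1) (alpha n i.+1) = 1 by rewrite /degx; ip_compute.
  have -> : x i.+1 * E i.+1 - (q^-1 * q ^ 0) *: (E i.+1 * x i.+1) = x i.
    by rewrite mulr1 [RHS]xv_rec //; lia.
  rewrite -mulrA -K_add ?hdeg ?inQN ?(inQ_alpha n_ge3 hm) //; last lia.
  have -> : - degx n i.+1 + - alpha n i.+1 = - degx n i by rewrite alphaS /degx; [wt_ring|lia].
  by rewrite expr1z addrC.
- rewrite /= addr0.
  rewrite (br_tens_DeltaE _ (w_term _ _) hm) ?br_mulK_E ?hdeg //; try lia.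
  have -> : ip (- alpha n i.+1) (ev n i + ev n i + 0) = 2 by ip_compute.
  have -> : ip (- degx n i) (alpha n i.+1) = -1 by rewrite /degx; ip_compute.
  rewrite (_ : q^-1 * q ^ 2 = q); last by rewrite -exprnP expr2 mulrA mulVf // mul1r.
  rewrite x_qcomm ?subrr ?tens0r ?add0r; last lia.
  by rewrite exprN1 [in RHS]mulrDl tensDl addrAC subrr add0r scalerBr.
- rewrite /= subr0 addr0.
  rewrite (br_tail_DeltaE (inQ_degx _) (weight_eps (i := i) (j := j) _ _) hm) //; try lia.
  + by ip_compute.
  + by rewrite /degx; ip_compute.
  have [lt_ji|lt_ij] : (j < i)%N \/ (i.+1 < j)%N by lia.
    by apply: x_E_comm_low; lia.
  by apply: x_E_comm; lia.
Qed.

Definition Delta_y_formula (i : nat) : Prop :=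
  Delta (y i) = tens (K (- degy n i)) (y i) + tens (y i) 1
    + qhat q *: (\sum_(1 <= j < n.+1) tens (eps i j * K (- degx n j)) (x j)
                 + \sum_(1 <= j < i) tens (Eup q E j.+1 i * K (- degy n j)) (y j)).

Lemma Delta_y_1 : Delta_y_formula 1.
Proof.
have hm : in_rng n 1 by rewrite /in_rng; lia.
have ip_x : ip (degx n 2) (alpha n 1) = -1 by rewrite /degx; ip_compute.
have deg_y : degx n 2 + alpha n 1 = degy n 1 by rewrite alpha1 /degx /degy; wt_ring.
rewrite /Delta_y_formula (big_geq (m := 1) (n := 1)) // addr0 [in LHS]yv_1 lrmorph_br Delta_x; last lia.
rewrite brDl brZl br_sum (br_lead_DeltaE (inQ_degx _) (weight_x _) hm ip_x); try lia.
rewrite deg_y -yv_1 (big_ltn (m := 1)); last lia.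
rewrite (big_ltn (m := 2)); last lia.
rewrite eps11 eps12 mul0r tens0l add0r.
rewrite (eq_big_nat _ _ (F2 := fun j => tens (eps 1 j * K (- degx n j)) (x j))).
  by rewrite scalerDr addrA.
move=> j hj; rewrite (br_tail_DeltaE (inQ_degx _) (weight_Edown (j := j) (s := 3) _ _) hm).
- by rewrite eps1j //; lia.
all: try lia.
- by rewrite /=; ip_compute.
- by rewrite /degx; ip_compute.
- by apply: x_E_comm; lia.
Qed.

Lemma br_eps_sum_DeltaE i : (1 <= i < n)%N ->
  \sum_(1 <= j < n.+1) br q (tens (eps i j * K (- degx n j)) (x j)) (Delta (E i.+1))
  = \sum_(1 <= j < n.+1) tens (eps i.+1 j * K (- degx n j)) (x j).
Proof.
move=> hi; rewrite (eq_big_nat _ _ (F2 := fun j => tens (eps i.+1 j * K (- degx n j)) (x j)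
  + (if j == i.+1 then tens (eps i i.+1 * K (- degx n i)) (x i) else 0)
  - (if j == i then tens (eps i i.+1 * K (- degx n i)) (x i) else 0))); last first.
  by move=> j hj; apply: br_eps_DeltaE; lia.
rewrite !big_split sumrN /= -!big_mkcond !big_nat1_eq.
have -> : (1 <= i.+1 < n.+1)%N by lia.
have -> : (1 <= i < n.+1)%N by lia.
by rewrite addrK.
Qed.

Lemma Delta_y_step i : (1 <= i < n)%N -> Delta_y_formula i -> Delta_y_formula i.+1.
Proof.
move=> hi IH; have hm : in_rng n i.+1 by rewrite /in_rng; lia.
have ip_y : ip (degy n i) (alpha n i.+1) = -1 by rewrite /degy; ip_compute.
have deg_y : degy n i + alpha n i.+1 = degy n i.+1 by rewrite alphaS /degy; [wt_ring|lia].
rewrite /Delta_y_formula [in LHS]yv_rec; last lia.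
rewrite lrmorph_br IH brDl brZl (br_lead_DeltaE (inQ_degy _) (weight_y _) hm ip_y); try lia.
rewrite deg_y -yv_rec; last lia.
rewrite brDl br_sum br_sum br_eps_sum_DeltaE //.
rewrite (big_nat_recr i) ?Eup_id /=; last lia.
rewrite (@eq_big_nat _ _ _ 1 i _ (fun j => tens (Eup q E j.+1 i.+1 * K (- degy n j)) (y j))).
  by nc_field k q_neq0.
move=> j hj; rewrite (br_tail_DeltaE (inQ_degy _) (weight_Eup (s := j.+1) (r := i) _ _) hm).
- by rewrite -Eup_rec //; lia.
all: try lia.
- by rewrite /=; ip_compute.
- by rewrite /degy; ip_compute.
- by apply: y_E_comm; lia.
Qed.

Lemma Delta_y i : (1 <= i <= n)%N -> Delta_y_formula i.
Proof.
elim: i => [|i IH] hi //; have [->|i_ge1] : i = 0%N \/ (1 <= i)%N by lia.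
  exact: Delta_y_1.
by apply: Delta_y_step; [lia | apply: IH; lia].
Qed.
End QuantumGroupD.

(* Since q is not a root of unity, q^2 != -1, i.e. q + q^-1 != 0. *)
Lemma qsum_neq0 (k : fieldType) (q : k) : q != 0 -> q ^+ 4 != 1 -> q + q^-1 != 0.
Proof.
move=> q_neq0 q4_neq1; apply: contra q4_neq1 => /eqP q_sum0.
have q2 : q ^+ 2 = -1.
  have : q * (q + q^-1) = 0 by rewrite q_sum0 mulr0.
  by rewrite mulrDr mulfV // expr2 => /eqP; rewrite addr_eq0 => /eqP.
have -> : q ^+ 4 = (q ^+ 2) ^+ 2 by rewrite -exprM.
by rewrite q2 sqrrN expr1n.
Qed.

Theorem lemma3p3
  (k : closedFieldType) (k_char0 : [pchar k] =i pred0)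
  (q : k) (q_neq0 : q != 0) (q_not_root : forall m : nat, (0 < m)%N -> q ^+ m != 1)
  (n : nat) (n_ge3 : (3 <= n)%N)
  (A : algType k) (E F : nat -> A) (K : wt n -> A)
  (HU : UqD_rels q E F K)
  (T : nat -> {lrmorphism A -> A}) (T_bij : forall i, bijective (T i))
  (HT : lusztig_rels q E F K (fun i => T i : A -> A))
  (B : algType k) (i1 i2 : {lrmorphism A -> B})
  (i12_comm : forall a b : A, i1 a * i2 b = i2 b * i1 a)
  (Delta : {lrmorphism A -> B})
  (HDE : forall i, in_rng n i ->
     Delta (E i) = i1 (K (- alpha n i)) * i2 (E i) + i1 (E i) * i2 1)
  (HDK : forall mu, inQ mu -> Delta (K mu) = i1 (K mu) * i2 (K mu)) :
  let tens (u v : A) : B := i1 u * i2 v in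
  let x := xv q n E in
  let y := yv q n E in
  forall i : nat, (1 <= i <= n)%N ->
    Delta (x i) =
      tens (K (- degx n i)) (x i) + tens (x i) 1
      + qhat q *: \sum_(i.+1 <= j < n.+1)
                    tens (Edown q E j i.+1 * K (- degx n j)) (x j)
    /\
    Delta (y i) =
      tens (K (- degy n i)) (y i) + tens (y i) 1
      + qhat q *: (\sum_(1 <= j < n.+1)
                      tens (eps q E (fun l => T l : A -> A) i j * K (- degx n j)) (x j)
                   + \sum_(1 <= j < i)
                      tens (Eup q E j.+1 i * K (- degy n j)) (y j)).
Proof.
move=> tens x y i hi.
have q2_neq0 := qsum_neq0 q_neq0 (q_not_root 4 isT).
case: HU => K_zero K_add K_conj_E _ [E_comm_rel E_serre_rel _].
split.
- exact: (Delta_x q_neq0 q2_neq0 n_ge3 E_comm_rel K_zero K_add K_conj_E i12_comm HDE hi).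
- exact: (Delta_y q_neq0 q2_neq0 n_ge3 E_comm_rel E_serre_rel HT K_zero K_add K_conj_E i12_comm HDE hi).
Qed.
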